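(* Let $\mathscr R$ be a categorical ring and let $r$ be an object of $\mathscr R$. Let $\alpha,\alpha':x\to y$ be parallel morphisms in $\mathscr R$ and $\beta\in\pi_1(\mathscr R)$ such that $\rho(y)\circ(\alpha+\beta)=\alpha'\circ\rho(x)$. Then \[ \rho(ry)\circ(r\alpha+r\beta)=r\alpha'\circ\rho(rx)\quad\text{and}\quad\rho(yr)\circ(\alpha r+\beta r)=\alpha'r\circ\rho(xr), \] where $r\alpha:rx\to ry$, $\alpha r:xr\to yr$ etc. denote the images of morphisms under the functors $r\cdot(-)$ and $(-)\cdot r$, while $r\beta,\beta r\in\pi_1(\mathscr R)$ denote the left and right actions defined below.
   Context: A categorical group is a groupoid with a monoidal structure $(+,0,a_{x,y,z}:(x+y)+z\to x+(y+z),\ \lambda(x):0+x\to x,\ \rho(x):x+0\to x)$ satisfying Mac Lane coherence, in which every object $x$ has an object $-x$ with an isomorphism $-x+x\to0$; it is symmetric if it carries a symmetry $c_{x,y}:x+y\to y+x$ making it a symmetric monoidal category. $\pi_1$ denotes the (abelian) automorphism group of $0$. In a symmetric categorical group write $v_{x,y,z,w}:(x+y)+(z+w)\to(x+z)+(y+w)$ for the composite $a_{x+z,y,w}\circ(a_{x,z,y}^{-1}+w)\circ((x+c_{y,z})+w)\circ(a_{x,y,z}+w)\circ a_{x+y,z,w}^{-1}$. A categorical ring is a symmetric categorical group $\mathscr R$ together with a bifunctor $(r,s)\mapsto rs$, an object $1$, and natural isomorphisms $m_{r,s,t}:(rs)t\to r(st)$, $\lambda^\cdot(r):1r\to r$,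 $\rho^\cdot(r):r1\to r$, $L_{r,s_0,s_1}:r(s_0+s_1)\to rs_0+rs_1$, $R_{r_0,r_1,s}:(r_0+r_1)s\to r_0s+r_1s$, such that $(\cdot,1,m,\lambda^\cdot,\rho^\cdot)$ is a monoidal structure and for all objects: (1) $(m_{r,s,t_0}+m_{r,s,t_1})\circ L_{rs,t_0,t_1}=L_{r,st_0,st_1}\circ rL_{s,t_0,t_1}\circ m_{r,s,t_0+t_1}$; (2) $(m_{r,s_0,t}+m_{r,s_1,t})\circ R_{rs_0,rs_1,t}\circ(L_{r,s_0,s_1}t)=L_{r,s_0t,s_1t}\circ rR_{s_0,s_1,t}\circ m_{r,s_0+s_1,t}$; (3) $(m_{r_0,s,t}+m_{r_1,s,t})\circ R_{r_0s,r_1s,t}\circ(R_{r_0,r_1,s}t)=R_{r_0,r_1,st}\circ m_{r_0+r_1,s,t}$; (4) $(\lambda^\cdot(r_0)+\lambda^\cdot(r_1))\circ L_{1,r_0,r_1}=\lambda^\cdot(r_0+r_1)$ and $(\rho^\cdot(r_0)+\rho^\cdot(r_1))\circ R_{r_0,r_1,1}=\rho^\cdot(r_0+r_1)$; (5) $v_{rs_{00},rs_{01},rs_{10},rs_{11}}\circ(L_{r,s_{00},s_{01}}+L_{r,s_{10},s_{11}})\circ L_{r,s_{00}+s_{01},s_{10}+s_{11}}=(L_{r,s_{00},s_{10}}+L_{r,s_{01},s_{11}})\circ L_{r,s_{00}+s_{10},s_{01}+s_{11}}\circ r\,v_{s_{00},s_{01},s_{10},s_{11}}$; (6) $v_{r_0s_0,r_0s_1,r_1s_0,r_1s_1}\circ(L_{r_0,s_0,s_1}+L_{r_1,s_0,s_1})\circ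 R_{r_0,r_1,s_0+s_1}=(R_{r_0,r_1,s_0}+R_{r_0,r_1,s_1})\circ L_{r_0+r_1,s_0,s_1}$; (7) $v_{r_{00}s,r_{01}s,r_{10}s,r_{11}s}\circ(R_{r_{00},r_{01},s}+R_{r_{10},r_{11},s})\circ R_{r_{00}+r_{01},r_{10}+r_{11},s}=(R_{r_{00},r_{10},s}+R_{r_{01},r_{11},s})\circ R_{r_{00}+r_{10},r_{01}+r_{11},s}\circ v_{r_{00},r_{01},r_{10},r_{11}}s$. For a monoidal functor $(f,f_+,f_0)$ between categorical groups ($f_+(x,y):f(x)+f(y)\to f(x+y)$, $f_0:f(0)\to0$), $f_\#:\pi_1\to\pi_1$ sends $\beta$ to $f_0\circ f(\beta)\circ f_0^{-1}$. For an object $r$, the functor $r\cdot(-)$ with $f_+(s_0,s_1)=L_{r,s_0,s_1}^{-1}$ is a monoidal functor for $+$ (with $f_0:r0\to0$ the uniquely determined unit isomorphism), and $rβ:=(r\cdot(-))_\#(\beta)$; similarly $(-)\cdot r$ with $R^{-1}_{-,-,r}$ gives $\beta r$. *)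

Record CRData := {
  Ob : Type;
  Hom : Ob -> Ob -> Type;
  comp : forall x y z : Ob, Hom y z -> Hom x y -> Hom x z;
  idm : forall x : Ob, Hom x x;
  inv : forall x y : Ob, Hom x y -> Hom y x;
  add : Ob -> Ob -> Ob;
  addm : forall x x' y y' : Ob, Hom x x' -> Hom y y' -> Hom (add x y) (add x' y');
  zero : Ob;
  assoc : forall x y z : Ob, Hom (add (add x y) z) (add x (add y z));
  lam : forall x : Ob, Hom (add zero x) x;
  rho : forall x : Ob, Hom (add x zero) x;
  sym : forall x y : Ob, Hom (add x y) (add y x);
  mul : Ob -> Ob -> Ob;
  mulm : forall x x' y y' : Ob, Hom x x' -> Hom y y' -> Hom (mul x y) (mul x' y');
  one : Ob;
  massoc : forall r s t : Ob, Hom (mul (mul r s) t) (mul r (mul s t));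
  mlam : forall r : Ob, Hom (mul one r) r;
  mrho : forall r : Ob, Hom (mul r one) r;
  Ldist : forall r s0 s1 : Ob, Hom (mul r (add s0 s1)) (add (mul r s0) (mul r s1));
  Rdist : forall r0 r1 s : Ob, Hom (mul (add r0 r1) s) (add (mul r0 s) (mul r1 s))
}.

Arguments Hom {D} : rename.
Arguments comp {D x y z} : rename.
Arguments idm {D} : rename.
Arguments inv {D x y} : rename.
Arguments add {D} : rename.
Arguments addm {D x x' y y'} : rename.
Arguments zero {D} : rename.
Arguments assoc {D} : rename.
Arguments lam {D} : rename.
Arguments rho {D} : rename.
Arguments sym {D} : rename.
Arguments mul {D} : rename.
Arguments mulm {D x x' y y'} : rename.
Arguments one {D} : rename.
Arguments massoc {D} : rename.
Arguments mlam {D} : rename.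
Arguments mrho {D} : rename.
Arguments Ldist {D} : rename.
Arguments Rdist {D} : rename.

Notation "g ∘ f" := (comp g f) (at level 40, left associativity).

Section CRLaws.
Variable D : CRData.
Notation O := (Ob D).

Definition groupoid_axioms : Prop :=
  (forall (x y z w : O) (f : Hom z w) (g : Hom y z) (h : Hom x y),
      f ∘ (g ∘ h) = (f ∘ g) ∘ h) /\
  (forall (x y : O) (f : Hom x y), idm y ∘ f = f) /\
  (forall (x y : O) (f : Hom x y), f ∘ idm x = f) /\
  (forall (x y : O) (f : Hom x y), inv f ∘ f = idm x) /\
  (forall (x y : O) (f : Hom x y), f ∘ inv f = idm y).

Definition bifunctor_axioms : Prop :=
  (forall x y : O, addm (idm x) (idm y) = idm (add x y)) /\
  (forall (x x' x'' y y' y'' : O) (f : Hom x' x'') (g : Hom x x')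
          (f' : Hom y' y'') (g' : Hom y y'),
      addm (f ∘ g) (f' ∘ g') = addm f f' ∘ addm g g') /\
  (forall x y : O, mulm (idm x) (idm y) = idm (mul x y)) /\
  (forall (x x' x'' y y' y'' : O) (f : Hom x' x'') (g : Hom x x')
          (f' : Hom y' y'') (g' : Hom y y'),
      mulm (f ∘ g) (f' ∘ g') = mulm f f' ∘ mulm g g').

Definition sym_cat_group_axioms : Prop :=
  (forall (x x' y y' z z' : O) (f : Hom x x') (g : Hom y y') (h : Hom z z'),
      assoc x' y' z' ∘ addm (addm f g) h = addm f (addm g h) ∘ assoc x y z) /\
  (forall (x x' : O) (f : Hom x x'), lam x' ∘ addm (idm zero) f = f ∘ lam x) /\
  (forall (x x' : O) (f : Hom x x'), rho x' ∘ addm f (idm zero) = f ∘ rho x) /\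
  (forall (x x' y y' : O) (f : Hom x x') (g : Hom y y'),
      sym x' y' ∘ addm f g = addm g f ∘ sym x y) /\
  (forall w x y z : O,
      assoc w x (add y z) ∘ assoc (add w x) y z
      = addm (idm w) (assoc x y z) ∘ assoc w (add x y) z ∘ addm (assoc w x y) (idm z)) /\
  (forall x y : O, addm (idm x) (lam y) ∘ assoc x zero y = addm (rho x) (idm y)) /\
  (forall x y : O, sym y x ∘ sym x y = idm (add x y)) /\
  (forall x y z : O,
      assoc y z x ∘ sym x (add y z) ∘ assoc x y z
      = addm (idm y) (sym x z) ∘ assoc y x z ∘ addm (sym x y) (idm z)) /\
  (forall x : O, exists y : O, inhabited (Hom (add y x) zero)).

Definition mul_monoidal_axioms : Prop :=
  (forall (x x' y y' z z' : O) (f : Hom x x') (g : Hom y y') (h : Hom z z'),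
      massoc x' y' z' ∘ mulm (mulm f g) h = mulm f (mulm g h) ∘ massoc x y z) /\
  (forall (x x' : O) (f : Hom x x'), mlam x' ∘ mulm (idm one) f = f ∘ mlam x) /\
  (forall (x x' : O) (f : Hom x x'), mrho x' ∘ mulm f (idm one) = f ∘ mrho x) /\
  (forall w x y z : O,
      massoc w x (mul y z) ∘ massoc (mul w x) y z
      = mulm (idm w) (massoc x y z) ∘ massoc w (mul x y) z ∘ mulm (massoc w x y) (idm z)) /\
  (forall x y : O, mulm (idm x) (mlam y) ∘ massoc x one y = mulm (mrho x) (idm y)) /\
  (forall (r r' s0 s0' s1 s1' : O) (f : Hom r r') (g0 : Hom s0 s0') (g1 : Hom s1 s1'),
      Ldist r' s0' s1' ∘ mulm f (addm g0 g1)
      = addm (mulm f g0) (mulm f g1) ∘ Ldist r s0 s1) /\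
  (forall (r0 r0' r1 r1' s s' : O) (f0 : Hom r0 r0') (f1 : Hom r1 r1') (g : Hom s s'),
      Rdist r0' r1' s' ∘ mulm (addm f0 f1) g
      = addm (mulm f0 g) (mulm f1 g) ∘ Rdist r0 r1 s).

End CRLaws.

Definition vmap {D : CRData} (x y z w : Ob D) : Hom (add (add x y) (add z w)) (add (add x z) (add y w)) :=
  assoc (add x z) y w ∘ addm (inv (assoc x z y)) (idm w)
  ∘ addm (addm (idm x) (sym y z)) (idm w) ∘ addm (assoc x y z) (idm w)
  ∘ inv (assoc (add x y) z w).

Section RingLaws.
Variable D : CRData.
Notation O := (Ob D).

Definition ring_axioms : Prop :=
  (forall r s t0 t1 : O,
      addm (massoc r s t0) (massoc r s t1) ∘ Ldist (mul r s) t0 t1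
      = Ldist r (mul s t0) (mul s t1) ∘ mulm (idm r) (Ldist s t0 t1) ∘ massoc r s (add t0 t1)) /\
  (forall r s0 s1 t : O,
      addm (massoc r s0 t) (massoc r s1 t) ∘ Rdist (mul r s0) (mul r s1) t
        ∘ mulm (Ldist r s0 s1) (idm t)
      = Ldist r (mul s0 t) (mul s1 t) ∘ mulm (idm r) (Rdist s0 s1 t) ∘ massoc r (add s0 s1) t) /\
  (forall r0 r1 s t : O,
      addm (massoc r0 s t) (massoc r1 s t) ∘ Rdist (mul r0 s) (mul r1 s) t
        ∘ mulm (Rdist r0 r1 s) (idm t)
      = Rdist r0 r1 (mul s t) ∘ massoc (add r0 r1) s t) /\
  (forall r0 r1 : O, addm (mlam r0) (mlam r1) ∘ Ldist one r0 r1 = mlam (add r0 r1)) /\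
  (forall r0 r1 : O, addm (mrho r0) (mrho r1) ∘ Rdist r0 r1 one = mrho (add r0 r1)) /\
  (forall r s00 s01 s10 s11 : O,
      vmap (mul r s00) (mul r s01) (mul r s10) (mul r s11)
        ∘ addm (Ldist r s00 s01) (Ldist r s10 s11) ∘ Ldist r (add s00 s01) (add s10 s11)
      = addm (Ldist r s00 s10) (Ldist r s01 s11) ∘ Ldist r (add s00 s10) (add s01 s11)
        ∘ mulm (idm r) (vmap s00 s01 s10 s11)) /\
  (forall r0 r1 s0 s1 : O,
      vmap (mul r0 s0) (mul r0 s1) (mul r1 s0) (mul r1 s1)
        ∘ addm (Ldist r0 s0 s1) (Ldist r1 s0 s1) ∘ Rdist r0 r1 (add s0 s1)
      = addm (Rdist r0 r1 s0) (Rdist r0 r1 s1) ∘ Ldist (add r0 r1) s0 s1) /\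
  (forall r00 r01 r10 r11 s : O,
      vmap (mul r00 s) (mul r01 s) (mul r10 s) (mul r11 s)
        ∘ addm (Rdist r00 r01 s) (Rdist r10 r11 s) ∘ Rdist (add r00 r01) (add r10 r11) s
      = addm (Rdist r00 r10 s) (Rdist r01 r11 s) ∘ Rdist (add r00 r10) (add r01 r11) s
        ∘ mulm (vmap r00 r01 r10 r11) (idm s)).

End RingLaws.

Record CatRing := {
  crdata :> CRData;
  cr_groupoid : groupoid_axioms crdata;
  cr_bifunctor : bifunctor_axioms crdata;
  cr_symcatgroup : sym_cat_group_axioms crdata;
  cr_mulmonoidal : mul_monoidal_axioms crdata;
  cr_ring : ring_axioms crdata
}.

(* The monoidal functors r.(-) (with f_+ = L^{-1}) and (-).r (with f_+ = R^{-1}), *)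
(* their unit isomorphisms f_0, and the induced actions on pi_1 = Hom 0 0.     *)

(* u : r0 -> 0 satisfies the unit axioms of a monoidal functor for r.(-) *)
Definition is_left_unit_iso {D : CRData} (r : Ob D) (u : Hom (mul r zero) zero) : Prop :=
  (forall x : Ob D,
      mulm (idm r) (lam x) ∘ inv (Ldist r zero x) ∘ addm (inv u) (idm (mul r x))
      = lam (mul r x)) /\
  (forall x : Ob D,
      mulm (idm r) (rho x) ∘ inv (Ldist r x zero) ∘ addm (idm (mul r x)) (inv u)
      = rho (mul r x)).

(* u : 0r -> 0 satisfies the unit axioms of a monoidal functor for (-).r *)
Definition is_right_unit_iso {D : CRData} (r : Ob D) (u : Hom (mul zero r) zero) : Prop :=
  (forall x : Ob D,
      mulm (lam x) (idm r) ∘ inv (Rdist zero x r) ∘ addm (inv u) (idm (mul x r))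
      = lam (mul x r)) /\
  (forall x : Ob D,
      mulm (rho x) (idm r) ∘ inv (Rdist x zero r) ∘ addm (idm (mul x r)) (inv u)
      = rho (mul x r)).

Definition lact {D : CRData} {r : Ob D} (u : Hom (mul r zero) zero) (b : Hom zero zero)
  : Hom zero zero := u ∘ mulm (idm r) b ∘ inv u.

Definition ract {D : CRData} {r : Ob D} (u : Hom (mul zero r) zero) (b : Hom zero zero)
  : Hom zero zero := u ∘ mulm b (idm r) ∘ inv u.

(* A monoidal functor (F, F_+, F_0) carries the relation rho y ∘ (alpha + beta) = alpha' ∘ rho x
   to rho (F y) ∘ (F alpha + F_# beta) = F alpha' ∘ rho (F x): conjugating F beta by F_0 is
   absorbed by the unit axiom rho (F x) = F (rho x) ∘ F_+ ∘ (1 + F_0^-1), and F_+ is natural.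
   Both statements are instances, for r.(-) with F_+ = L^-1 and (-).r with F_+ = R^-1. *)

Section Groupoid.
Variable D : CRData.
Hypothesis G : groupoid_axioms D.

Lemma compA {x y z w : Ob D} (f : Hom z w) (g : Hom y z) (h : Hom x y) :
  f ∘ (g ∘ h) = (f ∘ g) ∘ h.
Proof. apply G. Qed.

Lemma comp_id_l {x y : Ob D} (f : Hom x y) : idm y ∘ f = f.
Proof. apply G. Qed.

Lemma comp_id_r {x y : Ob D} (f : Hom x y) : f ∘ idm x = f.
Proof. apply G. Qed.

Lemma inv_comp_l {x y : Ob D} (f : Hom x y) : inv f ∘ f = idm x.
Proof. apply G. Qed.

Lemma inv_comp_r {x y : Ob D} (f : Hom x y) : f ∘ inv f = idm y.
Proof. apply G. Qed.

Lemma inv_square {a b c d : Ob D} (f : Hom c d) (m : Hom a c) (h : Hom b d) (k : Hom a b) :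
  f ∘ m = h ∘ k -> inv f ∘ h = m ∘ inv k.
Proof.
  intro E.
  rewrite <- (comp_id_r (inv f ∘ h)), <- (inv_comp_r k), compA, <- (compA (inv f) h k),
    <- E, compA, inv_comp_l, comp_id_l.
  reflexivity.
Qed.

End Groupoid.

Section Bifunctor.
Variable D : CRData.
Hypothesis B : bifunctor_axioms D.

Lemma addm_comp {x x' x'' y y' y'' : Ob D} (f : Hom x' x'') (g : Hom x x')
  (f' : Hom y' y'') (g' : Hom y y') :
  addm (f ∘ g) (f' ∘ g') = addm f f' ∘ addm g g'.
Proof. apply B. Qed.

Lemma mulm_comp {x x' x'' y y' y'' : Ob D} (f : Hom x' x'') (g : Hom x x')
  (f' : Hom y' y'') (g' : Hom y y') :
  mulm (f ∘ g) (f' ∘ g') = mulm f f' ∘ mulm g g'.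
Proof. apply B. Qed.

End Bifunctor.

Section RhoRelationTransport.
Variable D : CRData.
Hypothesis G : groupoid_axioms D.
Hypothesis B : bifunctor_axioms D.

Variable F : Ob D -> Ob D.
Variable Fm : forall x y : Ob D, Hom x y -> Hom (F x) (F y).
Arguments Fm {x y}.
Hypothesis Fm_comp : forall (x y z : Ob D) (f : Hom y z) (g : Hom x y),
  Fm (f ∘ g) = Fm f ∘ Fm g.

Variable Fplus : forall x y : Ob D, Hom (add (F x) (F y)) (F (add x y)).
Hypothesis Fplus_natural : forall (x x' y y' : Ob D) (f : Hom x x') (g : Hom y y'),
  Fplus x' y' ∘ addm (Fm f) (Fm g) = Fm (addm f g) ∘ Fplus x y.

Variable F0 : Hom (F zero) zero.
Hypothesis F_rho : forall x : Ob D,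
  Fm (rho x) ∘ Fplus x zero ∘ addm (idm (F x)) (inv F0) = rho (F x).

Definition sharp (b : Hom zero zero) : Hom zero zero := F0 ∘ Fm b ∘ inv F0.

Lemma rho_relation_transport (x y : Ob D) (alpha alpha' : Hom x y) (beta : Hom zero zero) :
  rho y ∘ addm alpha beta = alpha' ∘ rho x ->
  rho (F y) ∘ addm (Fm alpha) (sharp beta) = Fm alpha' ∘ rho (F x).
Proof.
  intro H.
  assert (conj_F0 : addm (idm (F y)) (inv F0) ∘ addm (Fm alpha) (sharp beta)
                    = addm (Fm alpha) (Fm beta) ∘ addm (idm (F x)) (inv F0)).
  { unfold sharp.
    rewrite <- !(addm_comp D B), (comp_id_l D G), (comp_id_r D G), !(compA D G),
      (inv_comp_l D G), (comp_id_l D G).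
    reflexivity. }
  rewrite <- F_rho, <- (compA D G), conj_F0, !(compA D G), <- (compA D G (Fm (rho y))),
    Fplus_natural, (compA D G), <- Fm_comp, H, Fm_comp, <- !(compA D G),
    (compA D G (Fm (rho x))), F_rho.
  reflexivity.
Qed.

End RhoRelationTransport.

Section MultiplicationFunctors.
Variable R : CatRing.

Lemma mulm_idl_comp (r : Ob R) {a b c : Ob R} (f : Hom b c) (g : Hom a b) :
  mulm (idm r) (f ∘ g) = mulm (idm r) f ∘ mulm (idm r) g.
Proof.
  rewrite <- (mulm_comp R (cr_bifunctor R)), (comp_id_l R (cr_groupoid R)).
  reflexivity.
Qed.

Lemma mulm_idr_comp (r : Ob R) {a b c : Ob R} (f : Hom b c) (g : Hom a b) :
  mulm (f ∘ g) (idm r) = mulm f (idm r) ∘ mulm g (idm r).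
Proof.
  rewrite <- (mulm_comp R (cr_bifunctor R)), (comp_id_l R (cr_groupoid R)).
  reflexivity.
Qed.

Lemma inv_Ldist_natural (r : Ob R) {x x' y y' : Ob R} (f : Hom x x') (g : Hom y y') :
  inv (Ldist r x' y') ∘ addm (mulm (idm r) f) (mulm (idm r) g)
  = mulm (idm r) (addm f g) ∘ inv (Ldist r x y).
Proof. apply (inv_square R (cr_groupoid R)), (cr_mulmonoidal R). Qed.

Lemma inv_Rdist_natural (r : Ob R) {x x' y y' : Ob R} (f : Hom x x') (g : Hom y y') :
  inv (Rdist x' y' r) ∘ addm (mulm f (idm r)) (mulm g (idm r))
  = mulm (addm f g) (idm r) ∘ inv (Rdist x y r).
Proof. apply (inv_square R (cr_groupoid R)), (cr_mulmonoidal R). Qed.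

End MultiplicationFunctors.

Theorem proposition2p3 (R : CatRing) (r x y : Ob R) (alpha alpha' : Hom x y)
  (beta : Hom (@zero R) zero)
  (uL : Hom (mul r zero) zero) (uR : Hom (mul zero r) zero) :
  is_left_unit_iso r uL -> is_right_unit_iso r uR ->
  rho y ∘ addm alpha beta = alpha' ∘ rho x ->
  rho (mul r y) ∘ addm (mulm (idm r) alpha) (lact uL beta)
    = mulm (idm r) alpha' ∘ rho (mul r x)
  /\
  rho (mul y r) ∘ addm (mulm alpha (idm r)) (ract uR beta)
    = mulm alpha' (idm r) ∘ rho (mul x r).
Proof.
  intros [_ uL_rho] [_ uR_rho] H.
  pose proof (cr_groupoid R) as G; pose proof (cr_bifunctor R) as B.
  split.
  - exact (rho_relation_transport R G B (mul r) (fun _ _ f => mulm (idm r) f)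
      (@mulm_idl_comp R r) (fun a b => inv (Ldist r a b)) (@inv_Ldist_natural R r)
      uL uL_rho x y alpha alpha' beta H).
  - exact (rho_relation_transport R G B (fun a => mul a r) (fun _ _ f => mulm f (idm r))
      (@mulm_idr_comp R r) (fun a b => inv (Rdist a b r)) (@inv_Rdist_natural R r)
      uR uR_rho x y alpha alpha' beta H).
Qed.
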